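(* Let $n\geq3$ and let $S_n$ act on $V=\mathbb{C}^n$ by its natural permutation representation. The pre-Drinfeld orbifold algebra maps for this action are exactly the linear $2$-cochains $\kappa^L=\kappa^L_1+\kappa^L_{\mathrm{tri}}$, where $\kappa^L_{\mathrm{tri}}$ is as defined below for some $a,b\in\mathbb{C}$ and $\kappa^L_1$ is supported on the identity with $\kappa^L_1(e_i,e_j)=a_1(e_i-e_j)$ for some $a_1\in\mathbb{C}$.
   Context: $S_n$ acts by $\sigma e_i=e_{\sigma(i)}$; $V^g$ is the fixed space of $g$; $\mathrm{Alt}_3$ is the set of cyclic permutations of $\{1,2,3\}$. A linear $2$-cochain is $\alpha=\sum_g\alpha_gg$ with $\alpha_g:\bigwedge^2V\to V$ linear; it is $S_n$-invariant if $h(\alpha_g(v,w))=\alpha_{hgh^{-1}}(hv,hw)$. A pre-Drinfeld orbifold algebra map is an $S_n$-invariant linear 2-cochain $\kappa^L$ with $\operatorname{im}\kappa^L_g\subseteq V^g$ for all $g$ and $\sum_{\sigma\in\mathrm{Alt}_3}\kappa^L_g(v_{\sigma(2)},v_{\sigma(3)})(gv_{\sigma(1)}-v_{\sigma(1)})=0$ in $S(V)$ for all $g,v_1,v_2,v_3$. $\kappa^L_{\mathrm{tri}}$ is the linear 2-cochain supported on 3-cycles with, for each 3-cycle $(ijk)$, $\kappa^L_{(ijk)}(e_i,e_j)=\kappa^L_{(ijk)}(e_j,e_k)=\kappa^L_{(ijk)}(e_k,e_i)=a(e_i+e_j+e_k)+b\sum_{l\notin\{i,j,k\}}e_l$ and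 $\kappa^L_{(ijk)}(e_l,e_m)=0$ whenever $e_l$ or $e_m$ lies in $V^{(ijk)}$. *)

From HB Require Import structures.
From mathcomp Require Import all_boot all_order all_algebra all_fingroup.
From mathcomp Require Import complex.
From mathcomp Require Import Rstruct.
From mathcomp Require Import mpoly.
Set Implicit Arguments.
Unset Strict Implicit.
Unset Printing Implicit Defensive.
Import GRing.Theory.
Local Open Scope ring_scope.

Definition C : numClosedFieldType := complex Rdefinitions.R.

Notation V n := 'rV[C]_n.
Definition e {n} (i : 'I_n) : V n := delta_mx 0 i.

(* Natural permutation action: (sigma v)_j = v_(sigma^-1 j), so sigma e_i = e_(sigma i). *)
Definition act {n} (s : 'S_n) (v : V n) : V n := \row_j v 0 ((s^-1)%g j).

(* A (linear) 2-cochain: for each g, a map kappa_g : V x V -> V.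
   A linear map  /\^2 V -> V  is the same as an alternating bilinear map V x V -> V. *)
Definition cochain n := 'S_n -> V n -> V n -> V n.

Definition alt_bilinear {n} (f : V n -> V n -> V n) : Prop :=
  [/\ forall (c : C) u u' w, f (c *: u + u') w = c *: f u w + f u' w,
      forall (c : C) u w w', f u (c *: w + w') = c *: f u w + f u w'
    & forall u, f u u = 0].

Definition linear_2cochain {n} (k : cochain n) : Prop :=
  forall g, alt_bilinear (k g).

(* S_n-invariance: h (alpha_g (v,w)) = alpha_{h g h^-1} (h v, h w).
   In mathcomp, (s * t) x = t (s x), so the composite h o g o h^-1 is h^-1 * g * h. *)
Definition Sn_invariant {n} (k : cochain n) : Prop :=
  forall (h g : 'S_n) v w, act h (k g v w) = k (h^-1 * g * h)%g (act h v) (act h w).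

Definition fixed_space {n} (g : 'S_n) (v : V n) : Prop := act g v = v.

(* The symmetric algebra S(V) = C[x_1,...,x_n]; a vector v is the linear form sum_i v_i x_i. *)
Definition toS {n} (v : V n) : {mpoly C[n]} := \sum_(i < n) (v 0 i)%:MP * 'X_i.

(* Sum over the cyclic permutations sigma in Alt_3 = {id, (123), (132)} of
   kappa_g(v_{sigma 2}, v_{sigma 3}) (g v_{sigma 1} - v_{sigma 1}), computed in S(V). *)
Definition alt3_sum {n} (k : cochain n) (g : 'S_n) (v1 v2 v3 : V n) : {mpoly C[n]} :=
    toS (k g v2 v3) * toS (act g v1 - v1)
  + toS (k g v3 v1) * toS (act g v2 - v2)
  + toS (k g v1 v2) * toS (act g v3 - v3).

Definition pre_DOA_map {n} (k : cochain n) : Prop :=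
  [/\ linear_2cochain k,
      Sn_invariant k,
      (forall g v w, fixed_space g (k g v w))
    & forall g v1 v2 v3, alt3_sum k g v1 v2 v3 = 0].

Definition is_3cycle {n} (g : 'S_n) : bool :=
  [exists i : 'I_n, exists j : 'I_n, exists k : 'I_n,
    [&& i != j, j != k, i != k, g i == j, g j == k, g k == i &
        [forall l : 'I_n, (l \notin [:: i; j; k]) ==> (g l == l)]]].

Definition bilin_ext {n} (f : 'I_n -> 'I_n -> V n) (v w : V n) : V n :=
  \sum_(l < n) \sum_(m < n) (v 0 l * w 0 m) *: f l m.

(* For a 3-cycle g = (ijk): a(e_i+e_j+e_k) + b sum_{l notin {i,j,k}} e_l,
   i.e. a * (sum of e_l over l moved by g) + b * (sum of e_l over l fixed by g). *)
Definition tri_value {n} (a b : C) (g : 'S_n) : V n :=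
  a *: (\sum_(l < n | g l != l) e l) + b *: (\sum_(l < n | g l == l) e l).

(* Values of kappa_tri_g on basis pairs (e_l, e_m) for g = (ijk):
   (e_i,e_j),(e_j,e_k),(e_k,e_i) -- i.e. g l = m, l <> m -- give tri_value;
   the reversed pairs give -tri_value (alternating); all other pairs
   (those with e_l or e_m in V^g, or l = m) give 0. *)
Definition tri_basis {n} (a b : C) (g : 'S_n) (l m : 'I_n) : V n :=
  if (g l == m) && (l != m) then tri_value a b g
  else if (g m == l) && (l != m) then - tri_value a b g
  else 0.

Definition kappa_tri {n} (a b : C) : cochain n :=
  fun g => if is_3cycle g then bilin_ext (tri_basis a b g) else (fun _ _ => 0).

Definition kappa_one {n} (a1 : C) : cochain n :=
  fun g => if g == 1%g then bilin_ext (fun i j => a1 *: (e i - e j)) else (fun _ _ => 0).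

(* For g <> 1, put v3 = e_c into the alt3 identity and evaluate it at x + y with y constant on
   the g-orbits.  If x is constant along the g-orbits of v1 and v2 but not along that of c, this
   shows that kappa_g(v1, v2) pairs to zero with every g-invariant y; being g-invariant itself, it
   vanishes.  Indicator functions of small sets provide such an x for every basis pair unless g is
   a 3-cycle, the exceptions being an orbit of length 2 (use a g-fixed vector instead) and a pair of
   2-cycles (use a transposition commuting with g).  For g = 1 and for 3-cycles, invariance under
   transpositions centralising a fixed element pins the values on basis pairs down to the two
   families of the statement, and conjugation transports them.  Conversely, on a 3-cycle (i j k)
   the family gives kappa(v, w) = det3(v, w) T, and the alt3 sum becomes T times the image of a
   vector identity among the det3's. *)

From Pilot Require Import Defs.
From HB Require Import structures.
From mathcomp Require Import all_boot all_order all_algebra all_fingroup.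
From mathcomp Require Import complex Rstruct mpoly ring.
Import Defs.

Set Implicit Arguments.
Unset Strict Implicit.
Unset Printing Implicit Defensive.
Import GRing.Theory Num.Theory.
Local Open Scope ring_scope.

Lemma conjg_mulE (G : groupType) (x y : G) : (y^-1 * x * y)%g = (x ^ y)%g.
Proof. by rewrite conjgE mulgA. Qed.

Lemma eqNmx (R : numDomainType) m n (A : 'M[R]_(m, n)) : (- A == A) = (A == 0).
Proof.
apply/eqP/eqP => [AA | ->]; last exact: oppr0.
by apply/matrixP => i j; apply/eqP; rewrite mxE -eqNr -{2}AA mxE.
Qed.

Lemma conjg_fixC (G : groupType) (x y : G) : ((x ^ y)%g == x) = ((y ^ x)%g == y).
Proof. by rewrite !conjg_fix -invg_comm eq_invg1. Qed.

Section FinPerm.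
Variable T : finType.
Implicit Types (s : {perm T}) (x y z : T).

Lemma perm_moved s : s != 1%g -> exists x, s x != x.
Proof.
move=> s1; apply/existsP; apply: contraR s1 => /existsPn fixs.
by apply/perm_act1P => x; apply/eqP/negPn/fixs.
Qed.

Lemma perm_redirect s x y :
  exists s' : {perm T}, s' x = y /\ forall z, z != x -> s z != y -> s' z = s z.
Proof.
exists (s * tperm (s x) y)%g; split => [|z zx szy]; first by rewrite permM tpermL.
by rewrite permM tpermD // ?(inj_eq perm_inj) 1?eq_sym.
Qed.

Lemma perm_map2 x0 x1 y0 y1 : x0 != x1 -> y0 != y1 ->
  exists s : {perm T}, s x0 = y0 /\ s x1 = y1.
Proof.
move=> x01 y01; have [s0 [s0x0 _]] := perm_redirect 1%g x0 y0.
have [s [sx1 sE]] := perm_redirect s0 x1 y1.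
by exists s; rewrite sE ?s0x0 // eq_sym.
Qed.

Lemma perm_map3 x0 x1 x2 y0 y1 y2 :
    x0 != x1 -> x1 != x2 -> x0 != x2 -> y0 != y1 -> y1 != y2 -> y0 != y2 ->
  exists s : {perm T}, [/\ s x0 = y0, s x1 = y1 & s x2 = y2].
Proof.
move=> x01 x12 x02 y01 y12 y02; have [s0 [s0x0 s0x1]] := perm_map2 x01 y01.
have [s [sx2 sE]] := perm_redirect s0 x2 y2.
by exists s; rewrite sE ?s0x0 1?[s x1]sE ?s0x1.
Qed.

Lemma sumD3 (M : zmodType) (F : T -> M) x0 x1 x2 :
    x0 != x1 -> x1 != x2 -> x0 != x2 ->
  \sum_x F x = F x0 + F x1 + F x2 + \sum_(x | x \notin [:: x0; x1; x2]) F x.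
Proof.
move=> x01 x12 x02; rewrite (bigD1 x0) // (bigD1 x1) 1?eq_sym //=.
rewrite (bigD1 x2) /= 1?eq_sym ?x02 1?eq_sym ?x12 // !addrA; congr (_ + _).
by apply: eq_bigl => x; rewrite !inE !negb_or andbA.
Qed.

End FinPerm.

Section ThreeCycles.
Variable n : nat.
Implicit Types (g h : 'S_n) (i j k l m : 'I_n).

Definition cycle3 g i j k : Prop :=
  [/\ i != j, j != k, i != k &
      [/\ g i = j, g j = k, g k = i & forall l, l \notin [:: i; j; k] -> g l = l]].

Lemma is_3cycleP g : is_3cycle g <-> exists i j k, cycle3 g i j k.
Proof.
split=> [/existsP [i /existsP [j /existsP [k]]] | [i [j [k [ij jk ik [gi gj gk gl]]]]]].
  case/and4P=> ij jk ik /and4P [/eqP gi /eqP gj /eqP gk /forallP gl].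
  by exists i, j, k; split=> //; split=> // l /(implyP (gl l))/eqP.
apply/existsP; exists i; apply/existsP; exists j; apply/existsP; exists k.
rewrite ij jk ik gi gj gk !eqxx; apply/forallP => l; apply/implyP => /gl ->.
exact: eqxx.
Qed.

Lemma cycle3_tperm i j k : i != j -> j != k -> i != k ->
  cycle3 (tperm i j * tperm i k)%g i j k.
Proof.
move=> ij jk ik; split=> //; split=> [||| l]; rewrite ?permM.
- by rewrite tpermL tpermD // eq_sym.
- by rewrite tpermR tpermL.
- by rewrite (tpermD ik jk) tpermR.
by rewrite !inE !negb_or => /and3P [il jl kl]; rewrite !tpermD // eq_sym.
Qed.

Lemma cycle3_moved g i j k l : cycle3 g i j k -> g l != l -> l \in [:: i; j; k].
Proof. by case=> _ _ _ [_ _ _ gl]; apply: contraR => /gl ->; rewrite eqxx. Qed.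

Lemma cycle3_fixed g i j k l : cycle3 g i j k -> g l = l -> l \notin [:: i; j; k].
Proof.
case=> ij jk ik [gi gj gk _] gl; rewrite !inE.
apply/negP => /or3P [] /eqP li; move: gl; rewrite li.
- by rewrite gi => ji; rewrite ji eqxx in ij.
- by rewrite gj => kj; rewrite kj eqxx in jk.
- by rewrite gk => ik'; rewrite ik' eqxx in ik.
Qed.

Lemma cycle3_rot g i j k : cycle3 g i j k -> cycle3 g j k i.
Proof.
case=> ij jk ik [gi gj gk gl].
split; [by [] | by rewrite eq_sym | by rewrite eq_sym | split=> // l lI; apply: gl].
by move: lI; rewrite !inE !negb_or => /and3P [-> -> ->].
Qed.

Lemma cycle3_from g i j k l : cycle3 g i j k -> g l != l ->
  cycle3 g l (g l) (g (g l)).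
Proof.
move=> c3 gl; have [_ _ _ [gi gj gk _]] := c3.
move: (cycle3_moved c3 gl); rewrite !inE => /or3P [] /eqP ->; rewrite ?(gi, gj, gk).
- exact: c3.
- exact: cycle3_rot c3.
- exact: cycle3_rot (cycle3_rot c3).
Qed.

Lemma cycle3_uniq g g' i j k : cycle3 g i j k -> cycle3 g' i j k -> g = g'.
Proof.
case=> _ _ _ [gi gj gk gl] [_ _ _ [g'i g'j g'k g'l]]; apply/permP => l.
case: (boolP (l \in [:: i; j; k])) => [|lI]; last by rewrite gl ?g'l.
by rewrite !inE => /or3P [] /eqP ->; rewrite ?gi ?gj ?gk ?g'i ?g'j ?g'k.
Qed.

Lemma cycle3J g h i j k : cycle3 g i j k -> cycle3 (g ^ h)%g (h i) (h j) (h k).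
Proof.
case=> ij jk ik [gi gj gk gl]; split; rewrite ?(inj_eq perm_inj) //.
split; rewrite ?permJ ?gi ?gj ?gk // => l lI; rewrite -(permKV h l) permJ gl //.
by move: lI; rewrite !inE -{1 2 3}(permKV h l) !(inj_eq perm_inj).
Qed.

Lemma is_3cycleJ g h : is_3cycle (g ^ h)%g = is_3cycle g.
Proof.
suff imp g' h' : is_3cycle g' -> is_3cycle (g' ^ h')%g.
  by apply/idP/idP => [/(imp _ (h^-1)%g)|/imp //]; rewrite conjgK.
move=> /is_3cycleP [i [j [k c3]]]; apply/is_3cycleP.
by exists (h' i), (h' j), (h' k); apply: cycle3J.
Qed.

Lemma is_3cycle1 : ~~ is_3cycle (1%g : 'S_n).
Proof.
by apply/negP => /is_3cycleP [i [j [k [ij _ _ [gi _ _ _]]]]]; rewrite -gi perm1 eqxx in ij.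
Qed.

Lemma is_3cycle_involution g l : is_3cycle g -> g (g l) = l -> g l = l.
Proof.
case/is_3cycleP => i [j [k c3]] ggl; apply/eqP/negPn/negP => gl.
by case: (cycle3_from c3 gl) => _ _; rewrite ggl eqxx.
Qed.

End ThreeCycles.

Lemma act_is_linear n (h : 'S_n) : linear (act h).
Proof. by move=> c u v; apply/rowP => j; rewrite !mxE. Qed.

HB.instance Definition _ n (h : 'S_n) :=
  GRing.isLinear.Build C (V n) (V n) *:%R (act h) (act_is_linear h).

Lemma toS_is_linear n : linear (@toS n).
Proof.
move=> c u v; rewrite /toS scaler_sumr -big_split; apply: eq_bigr => i _.
by rewrite !mxE mpolyCD mpolyCM mulrDl -mul_mpolyC mulrA.
Qed.

HB.instance Definition _ n :=
  GRing.isLinear.Build C (V n) {mpoly C[n]} *:%R (@toS n) (@toS_is_linear n).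

Section Action.
Variable n : nat.
Implicit Types (u v w : V n) (g h : 'S_n) (x y : 'I_n -> C).

Lemma e_coord (i j : 'I_n) : e i 0 j = (i == j)%:R.
Proof. by rewrite mxE eqxx eq_sym. Qed.

Lemma sum_e_coord (P : pred 'I_n) q : (\sum_(l | P l) e l) 0 q = (P q)%:R.
Proof.
rewrite summxE; case: (boolP (P q)) => Pq.
  rewrite (bigD1 q) //= e_coord eqxx big1 ?addr0 // => l /andP [_ /negbTE lq].
  by rewrite e_coord lq.
by rewrite big1 // => l Pl; rewrite e_coord; case: eqP => // lq; rewrite -lq Pl in Pq.
Qed.

Lemma actE h v j : act h v 0 j = v 0 ((h^-1)%g j).
Proof. by rewrite mxE. Qed.

Lemma act_e h i : act h (e i) = e (h i).
Proof. by apply/rowP => j; rewrite actE !e_coord (canF_eq (permK h)). Qed.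

Lemma e_inj : injective (@e n).
Proof.
move=> i j /rowP/(_ j); rewrite !e_coord eqxx; case: eqP => // _ /eqP.
by rewrite eq_sym oner_eq0.
Qed.

Lemma act1 v : act 1%g v = v.
Proof. by apply/rowP => j; rewrite actE invg1 perm1. Qed.

Lemma act_fixedP g u : act g u = u <-> forall p, u 0 (g p) = u 0 p.
Proof.
split=> [gu p | ug]; first by rewrite -{1}gu actE permK.
by apply/rowP => j; rewrite actE -{2}(permKV g j) ug.
Qed.

Definition pairing u x : C := \sum_i u 0 i * x i.

Lemma toS_meval u x : (toS u).@[x] = pairing u x.
Proof.
rewrite /toS /pairing; elim/big_rec2: _ => [|i a p _ <-]; first by rewrite meval0.
by rewrite mevalD mevalM mevalC mevalXU.
Qed.

Lemma pairing0l x : pairing 0 x = 0.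
Proof. by rewrite /pairing big1 // => i _; rewrite mxE mul0r. Qed.

Lemma pairing_e l x : pairing (e l) x = x l.
Proof.
rewrite /pairing (bigD1 l) //= e_coord eqxx mul1r big1 ?addr0 // => i /negbTE il.
by rewrite e_coord eq_sym il mul0r.
Qed.

Lemma pairing0r u : pairing u (fun=> 0) = 0.
Proof. by rewrite /pairing big1 // => i _; rewrite mulr0. Qed.

Lemma pairingDr u x y : pairing u (fun i => x i + y i) = pairing u x + pairing u y.
Proof. by rewrite /pairing -big_split; apply: eq_bigr => i _; rewrite mulrDr. Qed.

Lemma pairing_displacement g u x :
  pairing (act g u - u) x = \sum_i u 0 i * (x (g i) - x i).
Proof.
rewrite /pairing (eq_bigr (fun i => act g u 0 i * x i - u 0 i * x i)); last first.
  by move=> i _; rewrite !mxE mulrBl.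
rewrite sumrB (reindex_inj (@perm_inj _ g)) -sumrB; apply: eq_bigr => i _.
by rewrite actE permK mulrBr.
Qed.

Lemma pairing_displacement_e g l x : pairing (act g (e l) - e l) x = x (g l) - x l.
Proof. by rewrite pairing_displacement; apply: pairing_e. Qed.

Lemma pairing_displacement_fixed g u y :
  (forall p, y (g p) = y p) -> pairing (act g u - u) y = 0.
Proof. by move=> yg; rewrite pairing_displacement big1 // => i _; rewrite yg subrr mulr0. Qed.

Definition indicator (A : {set 'I_n}) : 'I_n -> C := fun i => (i \in A)%:R.

Lemma pairing_displacement_indicator g l (A : {set 'I_n}) :
  (g l \in A) = (l \in A) -> pairing (act g (e l) - e l) (indicator A) = 0.
Proof. by move=> glA; rewrite pairing_displacement_e /indicator glA subrr. Qed.

Lemma indicator_separates g c (A : {set 'I_n}) :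
  (g c \in A) != (c \in A) -> indicator A (g c) != indicator A c.
Proof.
by rewrite /indicator eqr_nat; case: (g c \in A); case: (c \in A).
Qed.

Lemma fixed_eq0_of_pairing g u :
  act g u = u -> (forall y, (forall p, y (g p) = y p) -> pairing u y = 0) -> u = 0.
Proof.
move=> /act_fixedP ug uy.
have uy' : pairing u (fun p => (u 0 p)^*) = 0 by apply: uy => p; rewrite ug.
have u0 := psumr_eq0P (fun i _ => mul_conjC_ge0 (u 0 i)) uy'.
by apply/rowP => p; rewrite mxE; apply/eqP; rewrite -mul_conjC_eq0 u0.
Qed.

Lemma toS_inj : injective (@toS n).
Proof.
suff coef u j : (toS u)@_U_(j) = u 0 j by move=> u w uw; apply/rowP => j; rewrite -coef uw coef.
rewrite /toS raddf_sum (bigD1 j) //= mcoeffCM mcoeffXU eqxx mulr1 big1 ?addr0 //.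
by move=> i /negbTE ij; rewrite mcoeffCM mcoeffXU ij mulr0.
Qed.

End Action.

Section AltBilinear.
Variables (n : nat) (f : V n -> V n -> V n).
Hypothesis fP : alt_bilinear f.
Implicit Types (u v w : V n).

Lemma alt_bilinearDl u u' w : f (u + u') w = f u w + f u' w.
Proof. by case: fP => fl _ _; have := fl 1 u u' w; rewrite !scale1r. Qed.

Lemma alt_bilinearDr u w w' : f u (w + w') = f u w + f u w'.
Proof. by case: fP => _ fr _; have := fr 1 u w w'; rewrite !scale1r. Qed.

Lemma alt_bilinear0l w : f 0 w = 0.
Proof. by apply: (addrI (f 0 w)); rewrite addr0 -alt_bilinearDl addr0. Qed.

Lemma alt_bilinear0r u : f u 0 = 0.
Proof. by apply: (addrI (f u 0)); rewrite addr0 -alt_bilinearDr addr0. Qed.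

Lemma alt_bilinearZl c u w : f (c *: u) w = c *: f u w.
Proof. by case: fP => fl _ _; rewrite -[c *: u]addr0 fl alt_bilinear0l addr0. Qed.

Lemma alt_bilinearZr c u w : f u (c *: w) = c *: f u w.
Proof. by case: fP => _ fr _; rewrite -[c *: w]addr0 fr alt_bilinear0r addr0. Qed.

Lemma alt_bilinearxx u : f u u = 0.
Proof. by case: fP. Qed.

Lemma alt_bilinearC u w : f w u = - f u w.
Proof.
have := alt_bilinearxx (u + w).
rewrite alt_bilinearDl !alt_bilinearDr !alt_bilinearxx add0r addr0 => /eqP.
by rewrite addrC addr_eq0 => /eqP.
Qed.

Lemma alt_bilinear_expand v w : f v w = bilin_ext (fun l m => f (e l) (e m)) v w.
Proof.
have sumL (c : 'I_n -> C) w' : f (\sum_i c i *: e i) w' = \sum_i c i *: f (e i) w'.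
  by elim/big_rec2: _ => [|i a b _ <-]; rewrite ?alt_bilinear0l // alt_bilinearDl alt_bilinearZl.
have sumR (c : 'I_n -> C) u : f u (\sum_i c i *: e i) = \sum_i c i *: f u (e i).
  by elim/big_rec2: _ => [|i a b _ <-]; rewrite ?alt_bilinear0r // alt_bilinearDr alt_bilinearZr.
rewrite {1}(row_sum_delta v) sumL /bilin_ext; apply: eq_bigr => l _.
rewrite {1}(row_sum_delta w) sumR scaler_sumr; apply: eq_bigr => m _.
by rewrite scalerA.
Qed.

End AltBilinear.

Section TriBasis.
Variable n : nat.
Implicit Types (g h : 'S_n) (l m q : 'I_n).

Lemma tri_value_coord (a b : C) g q :
  tri_value a b g 0 q = a * (g q != q)%:R + b * (g q == q)%:R.
Proof. by rewrite !mxE !sum_e_coord. Qed.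

Lemma tri_valueJ (a b : C) g h : act h (tri_value a b g) = tri_value a b (g ^ h)%g.
Proof.
apply/rowP => q; rewrite actE !tri_value_coord.
by rewrite -[in RHS](permKV h q) permJ (inj_eq perm_inj).
Qed.

Lemma tri_basis_fixl (a b : C) g l m : g l = l -> tri_basis a b g l m = 0.
Proof.
move=> gl; rewrite /tri_basis gl andbN.
case: (eqVneq l m) => [-> | lm]; first by rewrite andbF.
by rewrite -[X in g m == X]gl (inj_eq perm_inj) eq_sym (negbTE lm).
Qed.

Lemma tri_basis_fixr (a b : C) g l m : g m = m -> tri_basis a b g l m = 0.
Proof.
move=> gm; rewrite /tri_basis -[X in g l == X]gm (inj_eq perm_inj) andbN gm.
by case: (eqVneq l m).
Qed.

Definition kappa_basis (a1 a b : C) g l m : V n :=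
  if g == 1%g then a1 *: (e l - e m)
  else if is_3cycle g then tri_basis a b g l m else 0.

End TriBasis.

Section Rigidity.
Variables (n : nat) (K : cochain n).
Hypotheses (Klin : linear_2cochain K) (Kinv : Sn_invariant K).
Hypotheses (Kfix : forall g v w, fixed_space g (K g v w))
           (Kalt3 : forall g v1 v2 v3, alt3_sum K g v1 v2 v3 = 0).
Implicit Types (u v w : V n) (g h : 'S_n) (x y : 'I_n -> C) (l m : 'I_n).

Lemma KJ h g v w : act h (K g v w) = K (g ^ h)%g (act h v) (act h w).
Proof. by rewrite Kinv conjg_mulE. Qed.

Lemma K_coord_fixed g v w p : K g v w 0 (g p) = K g v w 0 p.
Proof. by move: p; apply/act_fixedP/Kfix. Qed.

Lemma K_act_self g v w : K g (act g v) (act g w) = K g v w.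
Proof. by have := Kinv g g v w; rewrite mulVg mul1g => <-; apply: Kfix. Qed.

Lemma alt3_pairing g v1 v2 v3 x :
  pairing (K g v2 v3) x * pairing (act g v1 - v1) x
  + pairing (K g v3 v1) x * pairing (act g v2 - v2) x
  + pairing (K g v1 v2) x * pairing (act g v3 - v3) x = 0.
Proof.
have := congr1 (meval x) (Kalt3 g v1 v2 v3).
by rewrite /alt3_sum !mevalD !mevalM !toS_meval meval0.
Qed.

Lemma K_eq0_of_separating g v1 v2 x c :
    pairing (act g v1 - v1) x = 0 -> pairing (act g v2 - v2) x = 0 ->
    x (g c) != x c ->
  K g v1 v2 = 0.
Proof.
move=> v1x v2x xc; set u := K g v1 v2.
have shifted y : (forall p, y (g p) = y p) -> pairing u x + pairing u y = 0.
  move=> yg; have := alt3_pairing g v1 v2 (e c) (fun i => x i + y i).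
  rewrite pairing_displacement_e /= !pairingDr v1x v2x !pairing_displacement_fixed //.
  rewrite yg addr0 !mulr0 !add0r opprD addrACA subrr addr0 => /eqP.
  by rewrite mulf_eq0 subr_eq0 (negbTE xc) orbF => /eqP.
have ux : pairing u x = 0 by have := shifted (fun=> 0) (fun=> erefl); rewrite pairing0r addr0.
apply: (fixed_eq0_of_pairing (g := g)) => [|y yg]; first exact: Kfix.
by have := shifted y yg; rewrite ux add0r.
Qed.

Lemma K_fixed_eq0 g v m : g != 1%g -> act g v = v -> K g v (e m) = 0.
Proof.
move=> /perm_moved [c gc] gv.
have v0 x : pairing (act g v - v) x = 0 by rewrite gv subrr pairing0l.
have [gm | gm] := eqVneq (g m) m.
  apply: (K_eq0_of_separating (x := indicator [set c]) (c := c)) => //.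
    by apply: pairing_displacement_indicator; rewrite gm.
  by apply: indicator_separates; rewrite !inE (negbTE gc) eqxx.
have [ggm | ggm] := eqVneq (g (g m)) m; last first.
  apply: (K_eq0_of_separating (x := indicator [set g (g m)]) (c := g m)) => //.
    apply: pairing_displacement_indicator.
    by rewrite !inE (inj_eq perm_inj) ![m == _]eq_sym (negbTE gm) (negbTE ggm).
  by apply: indicator_separates; rewrite !inE eqxx (inj_eq perm_inj) [m == _]eq_sym gm.
have Kgm : K g v (e (g m)) = K g v (e m) by rewrite -(K_act_self g v (e m)) gv act_e.
have Kgm' : K g (e (g m)) v = K g v (e m).
  (* No separating x exists here: the alt3 identity factors through X_(g m) - X_m in S(V). *)
  have := Kalt3 g v (e m) (e (g m)); rewrite /alt3_sum gv subrr !act_e ggm.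
  rewrite linear0 mulr0 add0r -[e m - _]opprB linearN mulrN -mulrBl -linearB => /eqP.
  rewrite mulf_eq0 !(raddf_eq0 _ (@toS_inj n)) !subr_eq0 => /orP [/eqP // | /eqP emm].
  by rewrite (e_inj emm) eqxx in gm.
by apply/eqP; rewrite -eqNmx -{1}Kgm' (alt_bilinearC (Klin g)) Kgm opprK.
Qed.

Lemma K_swap_eq0 g l m : g != 1%g -> g l = m -> g m = l -> K g (e l) (e m) = 0.
Proof.
move=> g1 gl gm; have : K g (e l + e m) (e l) = 0.
  by apply: K_fixed_eq0 => //; rewrite linearD /= !act_e gl gm addrC.
rewrite (alt_bilinearDl (Klin g)) (alt_bilinearxx (Klin g)) add0r => Kml.
by rewrite (alt_bilinearC (Klin g)) Kml oppr0.
Qed.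

Lemma K_succ_eq0 g l m : ~~ is_3cycle g -> l != m -> g l = m -> g m != l ->
  K g (e l) (e m) = 0.
Proof.
move=> g3 lm gl gml.
have [ggm | ggm] := eqVneq (g (g m)) l.
  have [p pI gp] : exists2 p, p \notin [:: l; m; g m] & g p != p.
    have [p /andP [pI gp] | fixp] := pickP [pred p | (p \notin [:: l; m; g m]) && (g p != p)].
      by exists p.
    case/negP: g3; apply/is_3cycleP; exists l, m, (g m).
    have mgm : m != g m by rewrite -{1}gl (inj_eq perm_inj).
    split=> //; first by rewrite eq_sym.
    split=> // p pI; apply/eqP.
    by have := fixp p; rewrite /= pI => /negbFE.
  move: pI; rewrite !inE !negb_or => /and3P [pl pm pgm].
  apply: (K_eq0_of_separating (x := indicator [set p]) (c := p)).
  - by apply: pairing_displacement_indicator; rewrite !inE gl ![_ == p]eq_sym (negbTE pl) (negbTE pm).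
  - by apply: pairing_displacement_indicator; rewrite !inE ![_ == p]eq_sym (negbTE pm) (negbTE pgm).
  - by apply: indicator_separates; rewrite !inE eqxx (negbTE gp).
have ggmm : g (g m) != m by rewrite -{2}gl (inj_eq perm_inj).
have ggmgm : g (g m) != g m by rewrite (inj_eq perm_inj) -{2}gl (inj_eq perm_inj) eq_sym.
apply: (K_eq0_of_separating (x := indicator [set l; m; g m]) (c := g m)).
- by apply: pairing_displacement_indicator; rewrite !inE gl !eqxx !orbT.
- by apply: pairing_displacement_indicator; rewrite !inE !eqxx !orbT.
- by apply: indicator_separates; rewrite !inE (negbTE ggm) (negbTE ggmm) (negbTE ggmgm) eqxx orbT.
Qed.

Lemma K_involution_eq0 g l m : g != 1%g -> g (g l) = l -> m != l -> m != g l ->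
  K g (e l) (e m) = 0.
Proof.
move=> g1 ggl ml mgl; set h := tperm l (g l); set T := K g (e l) (e m).
have gh : (g ^ h)%g = g by apply/eqP; rewrite conjg_fixC tpermJ ggl tpermC.
have hT : act h T = K g (e (g l)) (e m) by rewrite KJ gh !act_e tpermL tpermD // eq_sym.
have Tfix : act h T = T.
  apply/rowP => q; rewrite actE tpermV.
  by case: tpermP => [-> | -> |] //; rewrite /T ?K_coord_fixed // -{1}ggl K_coord_fixed.
have : K g (e l + e (g l)) (e m) = 0.
  by apply: K_fixed_eq0 => //; rewrite linearD /= !act_e ggl addrC.
rewrite (alt_bilinearDl (Klin g)) -hT Tfix => /eqP.
by rewrite addr_eq0 eq_sym eqNmx => /eqP.
Qed.

Lemma K_far_eq0 g l m : l != m -> g l != m -> g m != l -> g m != m -> g (g m) != m ->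
  K g (e l) (e m) = 0.
Proof.
move=> lm glm gml gm ggm; have ggmgm : g (g m) != g m by rewrite (inj_eq perm_inj).
apply: (K_eq0_of_separating (x := indicator [set m; g m]) (c := g m)).
- apply: pairing_displacement_indicator.
  by rewrite !inE (inj_eq perm_inj) (negbTE glm) (negbTE lm) [l == _]eq_sym (negbTE gml).
- by apply: pairing_displacement_indicator; rewrite !inE !eqxx orbT.
- by apply: indicator_separates; rewrite !inE (negbTE ggm) (negbTE ggmgm) eqxx orbT.
Qed.

Lemma K_non3cycle_eq0 g l m : g != 1%g -> ~~ is_3cycle g -> K g (e l) (e m) = 0.
Proof.
move=> g1 g3; have Kanti := alt_bilinearC (Klin g).
have [gl | gl] := eqVneq (g l) l; first by apply: K_fixed_eq0; rewrite // act_e gl.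
have [gm | gm] := eqVneq (g m) m.
  by rewrite Kanti K_fixed_eq0 ?oppr0 // act_e gm.
have [<- | lm] := eqVneq l m; first exact: (alt_bilinearxx (Klin g)).
have [glm | glm] := eqVneq (g l) m.
  have [gml | gml] := eqVneq (g m) l; first exact: K_swap_eq0.
  exact: K_succ_eq0.
have [gml | gml] := eqVneq (g m) l.
  by rewrite Kanti K_succ_eq0 ?oppr0 // eq_sym.
have [ggl | ggl] := eqVneq (g (g l)) l.
  by apply: K_involution_eq0; rewrite // eq_sym.
have [ggm | ggm] := eqVneq (g (g m)) m.
  by rewrite Kanti K_involution_eq0 ?oppr0 // eq_sym.
exact: K_far_eq0.
Qed.

Lemma K_id_basis (i0 i1 : 'I_n) l m : i0 != i1 ->
  K 1%g (e l) (e m) = K 1%g (e i0) (e i1) 0 i0 *: (e l - e m).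
Proof.
move=> i01; set U := K 1%g (e i0) (e i1).
have U_form : U = U 0 i0 *: (e i0 - e i1).
  set h := tperm i0 i1.
  have hU : act h U = - U.
    by rewrite KJ conj1g !act_e tpermL tpermR (alt_bilinearC (Klin 1%g)).
  have Uh q : U 0 (h q) = - U 0 q.
    by have /rowP/(_ q) := hU; rewrite actE tpermV mxE.
  apply/rowP => q; rewrite !mxE /=.
  have [-> | q0] := eqVneq q i0; first by rewrite (negbTE i01) subr0 mulr1.
  have [-> | q1] := eqVneq q i1; first by rewrite sub0r mulrN1 -Uh /h tpermL.
  by rewrite subrr mulr0; apply/eqP; rewrite -eqNr -Uh /h tpermD // eq_sym.
have [<- | lm] := eqVneq l m; first by rewrite (alt_bilinearxx (Klin 1%g)) subrr scaler0.
have [h [hl hm]] := perm_map2 i01 lm.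
have := KJ h 1%g (e i0) (e i1); rewrite conj1g !act_e hl hm => <-.
by rewrite [X in act h X]U_form linearZ linearB /= !act_e hl hm.
Qed.

Section StandardThreeCycle.
Variables i0 i1 i2 : 'I_n.
Hypotheses (i01 : i0 != i1) (i12 : i1 != i2) (i02 : i0 != i2).
Let c := (tperm i0 i1 * tperm i0 i2)%g.
Let T0 := K c (e i0) (e i1).

Definition tri_a := T0 0 i0.
(* For n = 3 there is no point fixed by c and tri_b is irrelevant. *)
Definition tri_b := if [pick p | p \notin [:: i0; i1; i2]] is Some p then T0 0 p else 0.

Lemma T0_coord_fixed p p' : p \notin [:: i0; i1; i2] -> p' \notin [:: i0; i1; i2] ->
  T0 0 p = T0 0 p'.
Proof.
move=> pI p'I; have [_ _ _ [_ _ _ cfix]] := cycle3_tperm i01 i12 i02.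
set h := tperm p p'.
have ch : (c ^ h)%g = c by apply/eqP; rewrite conjg_fixC tpermJ !cfix.
move: pI p'I; rewrite !inE !negb_or => /and3P [p0 p1 _] /and3P [p'0 p'1 _].
have hT0 : act h T0 = T0 by rewrite KJ ch !act_e !tpermD // eq_sym.
by have /rowP/(_ p') := hT0; rewrite actE tpermV tpermR.
Qed.

Lemma T0_tri_value : T0 = tri_value tri_a tri_b c.
Proof.
have c3 := cycle3_tperm i01 i12 i02; have [_ _ _ [ci0 ci1 _ _]] := c3.
apply/rowP => q; rewrite tri_value_coord.
have [cq | cq] := eqVneq (c q) q.
  rewrite /= mulr0 add0r mulr1 /tri_b; have qI := cycle3_fixed c3 cq.
  case: pickP => [p pI | none]; first exact: T0_coord_fixed.
  by have := none q; rewrite /= qI.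
rewrite /= mulr1 mulr0 addr0 /tri_a.
move: (cycle3_moved c3 cq); rewrite !inE => /or3P [] /eqP -> //; rewrite /T0.
  by rewrite -ci0 K_coord_fixed.
by rewrite -ci1 K_coord_fixed -ci0 K_coord_fixed.
Qed.

Lemma K_cycle3_edge g i j k : cycle3 g i j k -> K g (e i) (e j) = tri_value tri_a tri_b g.
Proof.
move=> c3; have [ij jk ik _] := c3.
have [h [hi hj hk]] := perm_map3 i01 i12 i02 ij jk ik.
have ch : (c ^ h)%g = g.
  by apply: cycle3_uniq (cycle3J h (cycle3_tperm i01 i12 i02)) _; rewrite hi hj hk.
by rewrite -ch -hi -hj -!act_e -KJ -/T0 T0_tri_value tri_valueJ.
Qed.

Lemma K_3cycle_basis g l m : is_3cycle g -> K g (e l) (e m) = tri_basis tri_a tri_b g l m.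
Proof.
move=> g3; have /is_3cycleP [i [j [k c3]]] := g3.
have g1 : g != 1%g by apply: contraTneq g3 => ->; exact: is_3cycle1.
have Kanti := alt_bilinearC (Klin g).
have [gl | gl] := eqVneq (g l) l.
  by rewrite tri_basis_fixl // K_fixed_eq0 // act_e gl.
have [gm | gm] := eqVneq (g m) m.
  by rewrite tri_basis_fixr // Kanti K_fixed_eq0 ?oppr0 // act_e gm.
have [<- | lm] := eqVneq l m.
  by rewrite (alt_bilinearxx (Klin g)) /tri_basis eqxx !andbF.
rewrite /tri_basis lm !andbT.
have [<- | glm] := eqVneq (g l) m; first exact: K_cycle3_edge (cycle3_from c3 gl).
have gml : g m = l.
  have c3l := cycle3_from c3 gl; have [_ _ _ [_ _ gggl _]] := c3l.
  move: (cycle3_moved c3l gm); rewrite !inE [m == l]eq_sym [m == g l]eq_sym.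
  by rewrite (negbTE lm) (negbTE glm) /= => /eqP ->.
by rewrite gml eqxx Kanti -{1}gml (K_cycle3_edge (cycle3_from c3 gm)).
Qed.

End StandardThreeCycle.

Lemma K_eq_kappa_basis : (3 <= n)%N ->
  exists a1 a b : C, forall g l m, K g (e l) (e m) = kappa_basis a1 a b g l m.
Proof.
move=> n3; pose i (k : 'I_3) : 'I_n := widen_ord n3 k.
have i01 : i 0 != i 1 by [].
have i12 : i 1 != i 2 by [].
have i02 : i 0 != i 2 by [].
exists (K 1%g (e (i 0)) (e (i 1)) 0 (i 0)), (tri_a (i 0) (i 1) (i 2)), (tri_b (i 0) (i 1) (i 2)).
move=> g l m; rewrite /kappa_basis; have [-> | g1] := eqVneq g 1%g; first exact: K_id_basis.
by case: ifP => g3; [exact: K_3cycle_basis | apply: K_non3cycle_eq0; rewrite ?g3].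
Qed.

End Rigidity.

Section Construction.
Variable n : nat.
Implicit Types (u v w : V n) (g h : 'S_n) (l m q : 'I_n).
Implicit Types (F : 'I_n -> 'I_n -> V n).

Lemma eq_bilin_ext F F' v w :
  (forall l m, F l m = F' l m) -> bilin_ext F v w = bilin_ext F' v w.
Proof. by move=> FF'; apply: eq_bigr => l _; apply: eq_bigr => m _; rewrite FF'. Qed.

Lemma bilin_ext0 v w : bilin_ext (fun _ _ => 0) v w = 0.
Proof. by rewrite /bilin_ext big1 // => l _; rewrite big1 // => m _; rewrite scaler0. Qed.

Lemma bilin_ext_alt_bilinear F :
  (forall l m, F m l = - F l m) -> alt_bilinear (bilin_ext F).
Proof.
move=> Fanti; split=> [c u u' w | c u w w' | u].
- rewrite /bilin_ext scaler_sumr -big_split; apply: eq_bigr => l _.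
  rewrite scaler_sumr -big_split; apply: eq_bigr => m _.
  by rewrite !mxE scalerA /= -scalerDl mulrDl mulrA.
- rewrite /bilin_ext scaler_sumr -big_split; apply: eq_bigr => l _.
  rewrite scaler_sumr -big_split; apply: eq_bigr => m _.
  by rewrite !mxE scalerA /= -scalerDl mulrDr mulrCA.
apply/eqP; rewrite -eqNmx; apply/eqP; rewrite {1}/bilin_ext exchange_big /= -sumrN.
apply: eq_bigr => l _; rewrite -sumrN; apply: eq_bigr => m _.
by rewrite [in RHS]Fanti scalerN mulrC.
Qed.

Lemma bilin_extJ h F F' v w : (forall l m, act h (F l m) = F' (h l) (h m)) ->
  act h (bilin_ext F v w) = bilin_ext F' (act h v) (act h w).
Proof.
move=> FF'; rewrite /bilin_ext linear_sum [RHS](reindex_inj (@perm_inj _ h)).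
apply: eq_bigr => l _; rewrite linear_sum [RHS](reindex_inj (@perm_inj _ h)).
by apply: eq_bigr => m _; rewrite linearZ /= FF' !actE !permK.
Qed.

Lemma bilin_ext_fixed g F v w : (forall l m, act g (F l m) = F l m) ->
  act g (bilin_ext F v w) = bilin_ext F v w.
Proof.
move=> Ffix; rewrite /bilin_ext linear_sum; apply: eq_bigr => l _.
by rewrite linear_sum; apply: eq_bigr => m _; rewrite linearZ /= Ffix.
Qed.

Lemma pre_DOA_map_bilin_ext (F : 'S_n -> 'I_n -> 'I_n -> V n) :
    (forall g l m, F g m l = - F g l m) ->
    (forall h g l m, act h (F g l m) = F (g ^ h)%g (h l) (h m)) ->
    (forall g l m, act g (F g l m) = F g l m) ->
    (forall g v1 v2 v3, alt3_sum (fun g => bilin_ext (F g)) g v1 v2 v3 = 0) ->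
  pre_DOA_map (fun g => bilin_ext (F g)).
Proof.
move=> Fanti FJ Ffix Falt3; split=> //.
- by move=> g; apply: bilin_ext_alt_bilinear.
- by move=> h g v w; rewrite /= conjg_mulE; apply: bilin_extJ.
- by move=> g v w; apply: bilin_ext_fixed.
Qed.

Lemma pre_DOA_map_ext (k k' : cochain n) :
  (forall g v w, k g v w = k' g v w) -> pre_DOA_map k' -> pre_DOA_map k.
Proof.
move=> kk' [k'lin k'inv k'fix k'alt3]; split.
- by move=> g; case: (k'lin g) => k'l k'r k'xx; split=> *; rewrite !kk' ?k'l ?k'r.
- by move=> h g v w; rewrite !kk' k'inv.
- by move=> g v w; rewrite /fixed_space kk'; apply: k'fix.
- by move=> g v1 v2 v3; rewrite /alt3_sum !kk'; apply: k'alt3.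
Qed.

Lemma tri_value_fixed (a b : C) g : act g (tri_value a b g) = tri_value a b g.
Proof. by rewrite tri_valueJ conjgE mulKg. Qed.

Lemma tri_basisJ (a b : C) h g l m :
  act h (tri_basis a b g l m) = tri_basis a b (g ^ h)%g (h l) (h m).
Proof.
by rewrite /tri_basis !permJ !(inj_eq perm_inj) !(fun_if (act h)) linearN /= tri_valueJ linear0.
Qed.

Lemma tri_basis_fixed (a b : C) g l m :
  act g (tri_basis a b g l m) = tri_basis a b g l m.
Proof.
by rewrite /tri_basis !(fun_if (act g)) linearN /= tri_value_fixed linear0.
Qed.

Lemma tri_basis_anti (a b : C) g l m :
  is_3cycle g -> tri_basis a b g m l = - tri_basis a b g l m.
Proof.
move=> g3; rewrite /tri_basis [m == l]eq_sym.
have [<- | lm] := eqVneq l m; first by rewrite /= !andbF oppr0.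
have [glm | glm] := eqVneq (g l) m; have [gml | gml] := eqVneq (g m) l;
  rewrite ?opprK ?oppr0 //.
by move: lm; rewrite -glm (is_3cycle_involution g3) ?eqxx // glm.
Qed.

(* The determinant with rows (1, 1, 1), (v_i, v_j, v_k) and (w_i, w_j, w_k). *)
Definition det3 (i j k : 'I_n) v w : C :=
  v 0 i * (w 0 j - w 0 k) + v 0 j * (w 0 k - w 0 i) + v 0 k * (w 0 i - w 0 j).

Lemma bilin_ext_tri_basis (a b : C) g i j k v w : cycle3 g i j k ->
  bilin_ext (tri_basis a b g) v w = det3 i j k v w *: tri_value a b g.
Proof.
move=> c3; have [ij jk ik [gi gj gk gfix]] := c3.
have ij' := negbTE ij; have ji' : (j == i) = false by rewrite eq_sym.
have jk' := negbTE jk; have kj' : (k == j) = false by rewrite eq_sym.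
have ik' := negbTE ik; have ki' : (k == i) = false by rewrite eq_sym.
have row3 l : \sum_m (v 0 l * w 0 m) *: tri_basis a b g l m =
    (v 0 l * w 0 i) *: tri_basis a b g l i + (v 0 l * w 0 j) *: tri_basis a b g l j
    + (v 0 l * w 0 k) *: tri_basis a b g l k.
  rewrite (sumD3 _ ij jk ik) [X in _ + X]big1 ?addr0 // => m mI.
  by rewrite tri_basis_fixr ?scaler0 // gfix.
rewrite /bilin_ext (sumD3 _ ij jk ik) [X in _ + X]big1 ?addr0; last first.
  by move=> l lI; rewrite big1 // => m _; rewrite tri_basis_fixl ?scaler0 // gfix.
rewrite !row3 /tri_basis gi gj gk !eqxx ij' ji' jk' kj' ik' ki' /=.
by apply/rowP => q; rewrite !mxE /det3; ring.
Qed.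

Lemma det3_displacement g i j k v1 v2 v3 : cycle3 g i j k ->
  det3 i j k v2 v3 *: (act g v1 - v1) + det3 i j k v3 v1 *: (act g v2 - v2)
  + det3 i j k v1 v2 *: (act g v3 - v3) = 0.
Proof.
case=> ij jk ik [gi gj gk gfix]; apply/rowP => q; rewrite !mxE /det3.
have giV : (g^-1)%g j = i by rewrite -gi permK.
have gjV : (g^-1)%g k = j by rewrite -gj permK.
have gkV : (g^-1)%g i = k by rewrite -gk permK.
case: (boolP (q \in [:: i; j; k])) => [|qI].
  by rewrite !inE => /or3P [] /eqP ->; rewrite ?giV ?gjV ?gkV; ring.
have gqV : (g^-1)%g q = q by rewrite -{1}(gfix q qI) permK.
by rewrite gqV !subrr !mulr0 !addr0.
Qed.

Section KappaBasis.
Variables a1 a b : C.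

Lemma kappa_basis_anti g l m : kappa_basis a1 a b g m l = - kappa_basis a1 a b g l m.
Proof.
rewrite /kappa_basis; have [_ | _] := eqVneq g 1%g; first by rewrite -opprB scalerN.
by have [g3 | _] := boolP (is_3cycle g); [exact: tri_basis_anti | rewrite oppr0].
Qed.

Lemma kappa_basisJ h g l m :
  act h (kappa_basis a1 a b g l m) = kappa_basis a1 a b (g ^ h)%g (h l) (h m).
Proof.
rewrite /kappa_basis conjg_eq1 is_3cycleJ.
have [_ | _] := eqVneq g 1%g; first by rewrite linearZ linearB /= !act_e.
by case: (is_3cycle g); [exact: tri_basisJ | exact: linear0].
Qed.

Lemma kappa_basis_fixed g l m : act g (kappa_basis a1 a b g l m) = kappa_basis a1 a b g l m.
Proof.
rewrite /kappa_basis; have [-> | _] := eqVneq g 1%g; first exact: act1.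
by case: (is_3cycle g); [exact: tri_basis_fixed | exact: linear0].
Qed.

Lemma alt3_kappa_basis g v1 v2 v3 :
  alt3_sum (fun g => bilin_ext (kappa_basis a1 a b g)) g v1 v2 v3 = 0.
Proof.
rewrite /alt3_sum; have [-> | g1] := eqVneq g 1%g.
  by rewrite !act1 !subrr linear0 !mulr0 !addr0.
have [g3 | ng3] := boolP (is_3cycle g); last first.
  have K0 v w : bilin_ext (kappa_basis a1 a b g) v w = 0.
    rewrite -(bilin_ext0 v w); apply: eq_bilin_ext => l m.
    by rewrite /kappa_basis (negbTE g1) (negbTE ng3).
  by rewrite !K0 linear0 !mul0r !addr0.
have /is_3cycleP [i [j [k c3]]] := g3.
have Kdet v w : bilin_ext (kappa_basis a1 a b g) v w = det3 i j k v w *: tri_value a b g.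
  rewrite -(bilin_ext_tri_basis _ _ _ _ c3); apply: eq_bilin_ext => l m.
  by rewrite /kappa_basis (negbTE g1) g3.
have D0 := congr1 toS (det3_displacement v1 v2 v3 c3).
rewrite 2!linearD !linearZ linear0 /= in D0.
by rewrite !Kdet !linearZ /= -!scalerAl !scalerAr -!mulrDr D0 mulr0.
Qed.

Lemma pre_DOA_map_kappa_basis : pre_DOA_map (fun g => bilin_ext (kappa_basis a1 a b g)).
Proof.
apply: pre_DOA_map_bilin_ext; [exact: kappa_basis_anti | exact: kappa_basisJ |
  exact: kappa_basis_fixed | exact: alt3_kappa_basis].
Qed.

Lemma kappa_one_add_tri g v w :
  kappa_one a1 g v w + kappa_tri a b g v w = bilin_ext (kappa_basis a1 a b g) v w.
Proof.
rewrite /kappa_one /kappa_tri /kappa_basis; have [-> | g1] := eqVneq g 1%g.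
  by rewrite /= (negbTE (@is_3cycle1 n)) addr0.
by case g3 : (is_3cycle g); rewrite /= add0r // bilin_ext0.
Qed.

End KappaBasis.

End Construction.

Theorem corollary4p7 (n : nat) (hn : (3 <= n)%N) (kappa : cochain n) :
  pre_DOA_map kappa <->
  exists a1 a b : C,
    forall (g : 'S_n) (v w : V n),
      kappa g v w = kappa_one a1 g v w + kappa_tri a b g v w.
Proof.
split=> [[klin kinv kfix kalt3] | [a1 [a [b kE]]]].
  have [a1 [a [b kbasis]]] := K_eq_kappa_basis klin kinv kfix kalt3 hn.
  exists a1, a, b => g v w; rewrite kappa_one_add_tri (alt_bilinear_expand (klin g)).
  exact: eq_bilin_ext.
apply: (pre_DOA_map_ext (k' := fun g => bilin_ext (kappa_basis a1 a b g))).
  by move=> g v w; rewrite kE kappa_one_add_tri.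
exact: pre_DOA_map_kappa_basis.
Qed.
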